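(* $2^{\omega}\in I_0^{*}$; that is, $2^\omega$ is the union of countably many sets $A\subseteq 2^\omega$ each of which has the property that there is a nonempty perfect set $P\subseteq 2^\omega$ such that the sets $A\oplus x$, $x\in P$, are pairwise disjoint.
   Context: $2^\omega$ is the Cantor group with coordinatewise addition modulo 2, denoted $\oplus$; $A\oplus x=\{a\oplus x:a\in A\}$. $I_0^*$ is the $\sigma$-ideal on $2^\omega$ generated by all (not necessarily Borel) sets $A\subseteq 2^\omega$ for which there is a nonempty perfect $P\subseteq 2^\omega$ with $\{A\oplus x:x\in P\}$ pairwise disjoint. *)

(* The Cantor space 2^omega is modelled as nat -> bool,
   with the product (first-n-coordinates) topology. *)
From Stdlib Require Import Arith.

Definition cantor := nat -> bool.

Definition cplus (a x : cantor) : cantor := fun n => xorb (a n) (x n).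

Definition translate (A : cantor -> Prop) (x : cantor) : cantor -> Prop :=
  fun z => exists a, A a /\ z = cplus a x.

Definition agree (n : nat) (x y : cantor) : Prop :=
  forall k, k < n -> x k = y k.

Definition closed_set (P : cantor -> Prop) : Prop :=
  forall x, (forall n, exists y, P y /\ agree n x y) -> P x.

Definition nonempty_perfect (P : cantor -> Prop) : Prop :=
  (exists x, P x) /\ closed_set P /\
  (forall x, P x -> forall n, exists y, P y /\ y <> x /\ agree n x y).

Definition disjoint (B C : cantor -> Prop) : Prop :=
  forall z, B z -> C z -> False.

Definition I0_generator (A : cantor -> Prop) : Prop :=
  exists P, nonempty_perfect P /\
    forall x y, P x -> P y -> x <> y -> disjoint (translate A x) (translate A y).

Definition in_I0star (B : cantor -> Prop) : Prop :=
  exists A : nat -> (cantor -> Prop),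
    (forall n, I0_generator (A n)) /\ (forall z, B z -> exists n, A n z).

(* Identify 2^omega with (2^omega)^omega by pairing coordinates, and let P_m be the m-th
   copy of 2^omega (the points vanishing off block m), a nonempty perfect set.  Let W be the
   subgroup of points supported on finitely many blocks, and choose a representative r(v) of
   each coset v + W.  Put A_m = { v | v + r(v) vanishes on block m }; since v + r(v) is in W,
   every v lies in some A_m.  If a + x = a' + y with a, a' in A_m and x, y in P_m, then
   a + a' = x + y is in W, so r(a) = r(a'), and on block m we get
   x + y = (a + r(a)) + (a' + r(a')) = 0; as x and y vanish off block m, x = y. *)
From Stdlib Require Import Arith Lia Bool Cantor FunctionalExtensionality
  PropExtensionality ClassicalEpsilon.

Definition zero : cantor := fun _ => false.

Lemma cplus_self (v : cantor) : cplus v v = zero.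
Proof. apply functional_extensionality; intros n; apply xorb_nilpotent. Qed.

Lemma cplus_comm (u v : cantor) : cplus u v = cplus v u.
Proof. apply functional_extensionality; intros n; apply xorb_comm. Qed.

Lemma cplus_cancel_l (u v w : cantor) : cplus (cplus u v) (cplus u w) = cplus v w.
Proof.
  apply functional_extensionality; intros n; unfold cplus.
  destruct (u n), (v n), (w n); reflexivity.
Qed.

Section CosetRepresentative.

Variable W : cantor -> Prop.
Hypothesis W_zero : W zero.
Hypothesis W_cplus : forall u v, W u -> W v -> W (cplus u v).

Definition coset_rep (v : cantor) : cantor :=
  epsilon (inhabits zero) (fun t => W (cplus v t)).

Lemma coset_rep_spec (v : cantor) : W (cplus v (coset_rep v)).
Proof. unfold coset_rep. apply epsilon_spec. exists v. rewrite cplus_self. exact W_zero. Qed.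

Lemma coset_rep_eq (v w : cantor) : W (cplus v w) -> coset_rep v = coset_rep w.
Proof.
  intros Wvw. assert (Wwv : W (cplus w v)) by (rewrite cplus_comm; exact Wvw).
  unfold coset_rep. f_equal. apply functional_extensionality; intros t.
  apply propositional_extensionality; split; intros Wt.
  - rewrite <- (cplus_cancel_l v). apply W_cplus; assumption.
  - rewrite <- (cplus_cancel_l w). apply W_cplus; assumption.
Qed.

End CosetRepresentative.

(* Coordinate [block m i] is the [i]-th coordinate of the [m]-th factor of (2^omega)^omega. *)
Definition block (m i : nat) : nat := Cantor.to_nat (m, i).

Lemma block_inj (m m' i i' : nat) : block m i = block m' i' -> m = m' /\ i = i'.
Proof.
  intros E. apply (f_equal Cantor.of_nat) in E. unfold block in E.
  rewrite !Cantor.cancel_of_to in E. injection E; auto.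
Qed.

Lemma block_surj (q : nat) : exists m i, q = block m i.
Proof.
  exists (fst (Cantor.of_nat q)), (snd (Cantor.of_nat q)).
  unfold block. rewrite <- surjective_pairing, Cantor.cancel_to_of. reflexivity.
Qed.

Lemma le_block (m i : nat) : i <= block m i.
Proof. pose proof (Cantor.to_nat_non_decreasing m i). unfold block. lia. Qed.

Definition copy (m : nat) (y : cantor) : Prop :=
  forall m' i, m' <> m -> y (block m' i) = false.

Lemma copy_perfect (m : nat) : nonempty_perfect (copy m).
Proof.
  split; [|split].
  - exists zero. intros m' i _. reflexivity.
  - intros y Hy m' i Hm'.
    destruct (Hy (S (block m' i))) as [y' [Hy' Eyy']].
    rewrite Eyy' by lia. apply Hy'; assumption.
  - intros y Hy n.
    set (flip := fun q => if q =? block m n then negb (y q) else y q).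
    exists flip; split; [|split].
    + intros m' i Hm'. unfold flip.
      destruct (Nat.eqb_spec (block m' i) (block m n)) as [E|_].
      * destruct (block_inj _ _ _ _ E). contradiction.
      * apply Hy; assumption.
    + intros E. apply (f_equal (fun f => f (block m n))) in E.
      unfold flip in E. rewrite Nat.eqb_refl in E.
      destruct (y (block m n)); discriminate.
    + intros q Hq. unfold flip.
      destruct (Nat.eqb_spec q (block m n)) as [E|_]; [|reflexivity].
      pose proof (le_block m n). lia.
Qed.

Lemma copy_eq_of_block (m : nat) (x y : cantor) :
  copy m x -> copy m y -> (forall i, x (block m i) = y (block m i)) -> x = y.
Proof.
  intros Hx Hy Hm. apply functional_extensionality; intros q.
  destruct (block_surj q) as [m' [i ->]].
  destruct (Nat.eq_dec m' m) as [->|Hm'].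
  - apply Hm.
  - rewrite Hx, Hy by assumption. reflexivity.
Qed.

Definition finite_support (w : cantor) : Prop :=
  exists M, forall m i, M <= m -> w (block m i) = false.

Lemma finite_support_zero : finite_support zero.
Proof. exists 0. reflexivity. Qed.

Lemma finite_support_cplus (u v : cantor) :
  finite_support u -> finite_support v -> finite_support (cplus u v).
Proof.
  intros [M Hu] [N Hv]. exists (M + N). intros m i Hm. unfold cplus.
  rewrite Hu, Hv by lia. reflexivity.
Qed.

Lemma finite_support_copy (m : nat) (y : cantor) : copy m y -> finite_support y.
Proof. intros Hy. exists (S m). intros m' i Hm'. apply Hy. lia. Qed.

Definition rep : cantor -> cantor := coset_rep finite_support.

Definition piece (m : nat) (v : cantor) : Prop :=
  forall i, cplus v (rep v) (block m i) = false.

Lemma piece_I0_generator (m : nat) : I0_generator (piece m).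
Proof.
  exists (copy m). split; [apply copy_perfect|].
  intros x y Hx Hy Hxy z [a [Ha ->]] [a' [Ha' Ez]].
  assert (Exy : cplus a a' = cplus x y).
  { apply functional_extensionality; intros q.
    apply (f_equal (fun f => f q)) in Ez. unfold cplus in *.
    destruct (a q), (a' q), (x q), (y q); simpl in *; congruence. }
  assert (Erep : rep a = rep a').
  { apply coset_rep_eq; [exact finite_support_cplus|]. rewrite Exy.
    apply finite_support_cplus; eapply finite_support_copy; eassumption. }
  apply Hxy, (copy_eq_of_block m); auto. intros i.
  specialize (Ha i). specialize (Ha' i).
  apply (f_equal (fun f => f (block m i))) in Exy.
  rewrite Erep in Ha. unfold cplus in *.
  destruct (a (block m i)), (a' (block m i)), (rep a' (block m i)),
    (x (block m i)), (y (block m i)); simpl in *; congruence.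
Qed.

Theorem theorem3p1 : in_I0star (fun _ : cantor => True).
Proof.
  exists piece. split; [exact piece_I0_generator|].
  intros v _.
  destruct (coset_rep_spec finite_support finite_support_zero v) as [M HM].
  exists M. intros i. apply HM. reflexivity.
Qed.
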